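(* Let $\mathbb{X}$ be a two-dimensional real Banach space, $z\in S_{\mathbb{X}}$ and $\epsilon\in[0,1)$. Then the set $A=\left[\bigcup_{\alpha\in\mathbb{R}}\overline{B}(\alpha z,\epsilon)\right]\cap S_{\mathbb{X}}$ has at most two connected components.
   Context: $\overline{B}(w,\epsilon)=\{u\in\mathbb{X}:\|u-w\|\leq\epsilon\}$ and $S_{\mathbb{X}}$ is the unit sphere of $\mathbb{X}$. *)

From HB Require Import structures.
From mathcomp Require Import all_boot all_order all_algebra.
From mathcomp Require Import all_classical all_reals all_analysis.
Set Implicit Arguments. Unset Strict Implicit. Unset Printing Implicit Defensive.
Import Order.TTheory GRing.Theory Num.Theory.
Import numFieldNormedType.Exports.
Local Open Scope classical_set_scope.
Local Open Scope ring_scope.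

Definition two_dimensional (R : realType) (V : lmodType R) : Prop :=
  exists e1 e2 : V,
    (forall a b : R, a *: e1 + b *: e2 = 0 -> a = 0 /\ b = 0) /\
    (forall x : V, exists a b : R, x = a *: e1 + b *: e2).

Definition cball (R : realType) (V : normedModType R) (w : V) (eps : R) : set V :=
  [set u | `|u - w| <= eps].

Definition usphere (R : realType) (V : normedModType R) : set V :=
  [set u | `|u| = 1].

Definition setA (R : realType) (V : normedModType R) (z : V) (eps : R) : set V :=
  (\bigcup_(alpha in [set: R]) cball (alpha *: z) eps) `&` @usphere R V.

Definition at_most_two_components (T : topologicalType) (A : set T) : Prop :=
  forall x y w, A x -> A y -> A w ->
    connected_component A x = connected_component A y \/
    connected_component A x = connected_component A w \/
    connected_component A y = connected_component A w.

From HB Require Import structures.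
From mathcomp Require Import all_boot all_order all_algebra.
From mathcomp Require Import all_classical all_reals all_analysis.
From mathcomp Require Import lra.
Set Implicit Arguments. Unset Strict Implicit. Unset Printing Implicit Defensive.
Import Order.TTheory GRing.Theory Num.Theory.
Import numFieldNormedType.Exports.
Local Open Scope classical_set_scope.
Local Open Scope ring_scope.

(* Every point u of A lies within eps of some alpha z, and replacing z by -z we
   may take alpha >= 0.  Normalizing the segment from u to alpha z gives a path
   on the sphere from u to z; it stays in A because along the segment the
   distance to the line R z shrinks linearly while the norm stays at least
   1 - s |u - alpha z| > 0.  Hence every point of A is in the component of z or
   of -z. *)

Section Normalize.
Variables (R : realType) (X : normedModType R).

Definition normalize (x : X) : X := `|x|^-1 *: x.

Lemma norm_normalize (x : X) : x != 0 -> `|normalize x| = 1.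
Proof.
by move=> x0; rewrite normrZ normrV ?unitfE ?normr_eq0 // normr_id mulVf ?normr_eq0.
Qed.

Lemma normalize_id (x : X) : `|x| = 1 -> normalize x = x.
Proof. by move=> x1; rewrite /normalize x1 invr1 scale1r. Qed.

Lemma normalizeZ (a : R) (x : X) : 0 < a -> normalize (a *: x) = normalize x.
Proof.
move=> a0; rewrite /normalize normrZ gtr0_norm // invfM scalerA mulrAC.
by rewrite mulVf ?gt_eqF // mul1r.
Qed.

Lemma normalize_cvg (x : X) : x != 0 -> normalize y @[y --> x] --> normalize x.
Proof.
move=> x0; apply: cvgZ; last exact: cvg_id.
by apply: cvgV; [rewrite normr_eq0 | exact: cvg_norm].
Qed.

Lemma connected_normalize_segment (u y : X) :
  (forall s, 0 <= s <= 1 -> u + s *: (y - u) != 0) ->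
  connected [set normalize (u + s *: (y - u)) | s in `[0, 1]].
Proof.
move=> seg_neq0.
apply: connected_continuous_connected; first exact: segment_connected.
apply: continuous_in_subspaceT => s; rewrite inE /= in_itv /= => s01.
apply: cvg_comp (normalize_cvg (seg_neq0 _ s01)).
by apply: cvgD; [exact: cvg_cst | apply: cvgZl; exact: cvg_id].
Qed.

Lemma norm_segment_ge (u y : X) (s : R) : `|u| = 1 -> 0 <= s ->
  1 - s * `|u - y| <= `|u + s *: (y - u)|.
Proof.
move=> u1 s0; have := ler_normD (u + s *: (y - u)) (s *: (u - y)).
rewrite -addrA -scalerDr addrA subrK subrr scaler0 addr0 u1 normrZ ger0_norm //.
by rewrite lerBlDr.
Qed.

(* (1 - s) u + s y differs from y by (1 - s) (u - y), while its norm is at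
   least 1 - s |u - y| (norm_segment_ge). *)
Lemma dist_normalize_segment (u y : X) (s eps : R) :
  `|u| = 1 -> `|u - y| <= eps -> eps <= 1 -> 0 <= s <= 1 ->
  `|normalize (u + s *: (y - u)) - `|u + s *: (y - u)|^-1 *: y| <= eps.
Proof.
move=> u1 uy_le eps1 /andP[s0 s1]; set w := u + s *: (y - u).
have eps0 : 0 <= eps by exact: le_trans uy_le.
have [-> | w0] := eqVneq w 0.
  by rewrite /normalize normr0 invr0 !scale0r subr0 normr0.
have wpos : 0 < `|w| by rewrite normr_gt0.
have -> : normalize w - `|w|^-1 *: y = (`|w|^-1 * (1 - s)) *: (u - y).
  rewrite -scalerA -scalerBr; congr (_ *: _).
  by rewrite /w scalerBl scale1r -[y - u]opprB scalerN addrAC.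
rewrite normrZ normrM normrV ?unitfE ?gt_eqF // normr_id ger0_norm ?subr_ge0 //.
rewrite -mulrA ler_pdivrMl // [_ * eps]mulrC.
have w_ge := norm_segment_ge y u1 s0; rewrite -/w in w_ge; set d := `|u - y| in uy_le w_ge *.
have d1 : d <= 1 by exact: le_trans eps1.
have : eps * (1 - s * d) <= eps * `|w| by rewrite ler_wpM2l.
have : (1 - s) * d <= (1 - s) * eps by rewrite ler_wpM2l // subr_ge0.
have : 0 <= s * eps * (1 - d) by rewrite !mulr_ge0 // subr_ge0.
lra.
Qed.

End Normalize.

Section SetA.
Variables (R : realType) (X : normedModType R).
Implicit Types (z u : X) (eps alpha : R).

Lemma setAN z eps : setA (- z) eps = setA z eps.
Proof.
congr (_ `&` _); apply/seteqP; split=> x [a _ xa]; exists (- a) => //.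
  by move: xa; rewrite /cball /= scalerN -scaleNr.
by move: xa; rewrite /cball /= scalerN scaleNr opprK.
Qed.

Lemma setA_connected_component z eps u alpha :
  `|z| = 1 -> eps < 1 -> `|u| = 1 -> 0 <= alpha -> `|u - alpha *: z| <= eps ->
  connected_component (setA z eps) u z.
Proof.
move=> z1 eps1 u1 alpha0 u_near; set y := alpha *: z.
have alpha_gt0 : 0 < alpha.
  rewrite lt_def alpha0 andbT; apply: contraTneq u_near => ->.
  by rewrite /y scale0r subr0 u1 -ltNge.
have seg_neq0 s : 0 <= s <= 1 -> u + s *: (y - u) != 0.
  case/andP=> s0 s1; rewrite -normr_gt0; apply: lt_le_trans (norm_segment_ge y u1 s0).
  by rewrite subr_gt0; apply: le_lt_trans (le_lt_trans u_near eps1); rewrite ler_piMl.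
set B := [set normalize (u + s *: (y - u)) | s in `[0, 1]].
have uB : B u.
  by exists 0; [rewrite /= in_itv /= lexx ler01 | rewrite scale0r addr0 normalize_id].
have zB : B z.
  exists 1; first by rewrite /= in_itv /= lexx ler01.
  by rewrite scale1r addrC subrK normalizeZ // normalize_id.
apply: connected_component_max uB _ (connected_normalize_segment seg_neq0) _ zB.
move=> _ [s s01 <-]; rewrite /= in_itv /= in s01.
split; last exact: norm_normalize (seg_neq0 _ s01).
exists (`|u + s *: (y - u)|^-1 * alpha) => //.
rewrite /cball /= -scalerA.
exact: dist_normalize_segment u1 u_near (ltW eps1) s01.
Qed.

Lemma setA_component_cases z eps u : `|z| = 1 -> eps < 1 -> setA z eps u ->
  connected_component (setA z eps) u = connected_component (setA z eps) z \/
  connected_component (setA z eps) u = connected_component (setA z eps) (- z).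
Proof.
move=> z1 eps1 [[alpha _ u_near] u1].
have [alpha0 | alpha_lt0] := leP 0 alpha.
  by left; apply: same_connected_component; exact: setA_connected_component u_near.
right; rewrite -setAN; apply: same_connected_component.
apply: (@setA_connected_component _ _ _ (- alpha)) => //.
- by rewrite normrN.
- by rewrite oppr_ge0 ltW.
- by rewrite scalerN scaleNr opprK.
Qed.

End SetA.

Theorem lemma2p2 (R : realType) (X : completeNormedModType R)
  (hdim : two_dimensional X) (z : X) (hz : `|z| = 1) (eps : R)
  (heps0 : 0 <= eps) (heps1 : eps < 1) :
  at_most_two_components (setA z eps).
Proof.
move=> x y w Ax Ay Aw.
have := setA_component_cases hz heps1 Ax; have := setA_component_cases hz heps1 Ay.
have := setA_component_cases hz heps1 Aw.
by case=> ->; case=> ->; case=> ->; tauto.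
Qed.
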